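(* Let $h$ be a strictly concave reduced function such that $h(\rho\otimes\sigma)\ge h(\rho)$ and $h(\rho\otimes\sigma)\ge h(\sigma)$ for all states $\rho,\sigma$. Let $E_{g'}^{(3)}$ and $E_{g'}^{(2)}$ be defined on pure states by $E_{g'}^{(m)}(|\psi\rangle^{A_1\cdots A_m})=\max_i h(\rho^{A_i})$ if $h(\rho^{A_i})>0$ for all $i$ and $=0$ otherwise, extended to mixed states by the convex roof. Consider tripartite pure states of the form $$|\eta\rangle^{ABC}=|\eta_1\rangle^{AB_1}\otimes|\eta_2\rangle^{B_2C},$$ where, up to a local unitary on $B$, $\mathcal H^B$ contains a subspace isomorphic to $\mathcal H^{B_1}\otimes\mathcal H^{B_2}$. Then $E_{g'}^{(3)}$ is tightly complete monogamous on such states: for every genuinely entangled state $|\eta\rangle^{ABC}$ of this form and every pair of partitions $X\succ^bY$ of $ABC$ with $E_{g'}^{(k)}(X)=E_{g'}^{(l)}(Y)$ at $|\eta\rangle$, one has $E_{g'}^{( * )}(\Gamma)=0$ for all $\Gamma\in\Xi(X-Y)$.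
   Context: All Hilbert spaces are finite-dimensional; $\rho^X$ is the reduced state on a set $X$ of parties. Reduced function: a function $h$ from density matrices (of any finite dimension) to $[0,\infty)$ that is concave, depends only on the multiset of nonzero eigenvalues of its argument, and satisfies $h(\rho)=0$ iff $\rho$ is pure. Strictly concave: $h(\lambda\rho_1+(1-\lambda)\rho_2)>\lambda h(\rho_1)+(1-\lambda)h(\rho_2)$ for $\rho_1\ne\rho_2$, $0<\lambda<1$. Convex roof: $E(\rho)=\min\sum_jp_jE(|\psi_j\rangle)$ over pure-state decompositions of $\rho$. A pure state is biseparable if it is a product $|\psi\rangle^X\otimes|\psi\rangle^Y$ for some bipartition $X|Y$ of the parties; otherwise (for pure states) it is genuinely entangled. Partitions: $X_1|\cdots|X_k$ with pairwise disjoint nonempty sets of parties, each regarded as one party; $E^{(k)}(X_1|\cdots|X_k)$ is $E^{(k)}$ evaluated on $\rho^{X_1\cdots X_k}$. $X\succ^bY$ means $Y$ is obtained from $X$ by merging some of the $X_j$ into one party; $X\succ Y$ means $Y$ is obtained from $X$ by one or several of: discarding some $X_j$, merging some $X_j$'s, discarding parties inside some $X_t$ with $\ge2$ parties. $\Xi(X-Y)$ (for $X\succ Y$): the set of partitions coarser than $X$ that (i) are neither coarser than $Y$ nor ones from which $Y$ can be obtained by coarsening, and (ii) either contain no subsystem of $Y$, or contain some $Y_j$'s (merged into one party) together with other subsystems of $X$ not in $Y$; (iii) if $Y_1|\cdots|Y_l=X_1|\cdots|X_{l-1}|X_l\cdots X_k$, $\Xi$ consists only of $X_l|\cdots|X_k$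 and partitions coarser than it. For tripartite systems: $\Xi(A|B|C-A|BC)=\{B|C\}$, $\Xi(A|B|C-B|AC)=\{A|C\}$, $\Xi(A|B|C-C|AB)=\{A|B\}$. *)

From HB Require Import structures.
From mathcomp Require Import all_boot all_order all_algebra.
From mathcomp Require Import complex mxtens.
From mathcomp Require Import boolp classical_sets reals.
Set Implicit Arguments.
Unset Strict Implicit.
Unset Printing Implicit Defensive.
Import Order.TTheory GRing.Theory Num.Theory.
Local Open Scope ring_scope.
Local Open Scope complex_scope.

Section QInfo.
Variable R : realType.
Local Notation C := (R[i]).

Definition adjmx m n (A : 'M[C]_(m, n)) : 'M[C]_(n, m) := (map_mx (@conjc R) A)^T.

Definition psd n (A : 'M[C]_n) : Prop :=
  forall v : 'cV[C]_n, 0 <= (adjmx v *m A *m v) 0 0.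

Definition density n (A : 'M[C]_n) : Prop := psd A /\ \tr A = 1.

Definition unitvec n (v : 'cV[C]_n) : Prop := adjmx v *m v = 1%:M.

Definition proj n (v : 'cV[C]_n) : 'M[C]_n := v *m adjmx v.

Definition pure n (A : 'M[C]_n) : Prop := exists v : 'cV[C]_n, unitvec v /\ A = proj v.

Definition ptr2 m n (A : 'M[C]_(m * n)) : 'M[C]_m :=
  \matrix_(i, i') \sum_(j < n) A (mxtens_index (i, j)) (mxtens_index (i', j)).
Definition ptr1 m n (A : 'M[C]_(m * n)) : 'M[C]_n :=
  \matrix_(j, j') \sum_(i < m) A (mxtens_index (i, j)) (mxtens_index (i, j')).

(* same multiset of nonzero eigenvalues (roots of the characteristic
   polynomial with multiplicity) *)
Definition same_nonzero_spectrum m n (A : 'M[C]_m) (B : 'M[C]_n) : Prop :=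
  forall x : C, x != 0 -> mup x (char_poly A) = mup x (char_poly B).

Definition dfun := forall n, 'M[C]_n -> R.

Definition concave_on_states (h : dfun) : Prop :=
  forall n (r1 r2 : 'M[C]_n) (l : R), density r1 -> density r2 ->
    0 <= l <= 1 ->
    l * h n r1 + (1 - l) * h n r2 <= h n (l%:C *: r1 + (1 - l)%:C *: r2).

Definition strictly_concave_on_states (h : dfun) : Prop :=
  forall n (r1 r2 : 'M[C]_n) (l : R), density r1 -> density r2 ->
    r1 != r2 -> 0 < l < 1 ->
    l * h n r1 + (1 - l) * h n r2 < h n (l%:C *: r1 + (1 - l)%:C *: r2).

Definition reduced_function (h : dfun) : Prop :=
  [/\ (forall n (r : 'M[C]_n), density r -> 0 <= h n r),
      concave_on_states h,
      (forall m n (r : 'M[C]_m) (s : 'M[C]_n), density r -> density s ->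
          same_nonzero_spectrum r s -> h m r = h n s)
    & (forall n (r : 'M[C]_n), density r -> (h n r = 0 <-> pure r))].

Definition tensor_monotone (h : dfun) : Prop :=
  forall m n (r : 'M[C]_m) (s : 'M[C]_n), density r -> density s ->
    h m r <= h (m * n)%N (r *t s) /\ h n s <= h (m * n)%N (r *t s).

Definition Eg2_pure (h : dfun) m n (psi : 'cV[C]_(m * n)) : R :=
  let a := h m (ptr2 (proj psi)) in
  let b := h n (ptr1 (proj psi)) in
  if (0 < a) && (0 < b) then Num.max a b else 0.

(* convex roof extension (the minimum is attained, so it equals the infimum) *)
Definition Eg2 (h : dfun) m n (rho : 'M[C]_(m * n)) : R :=
  inf [set s : R | exists k (p : 'I_k -> R) (psi : 'I_k -> 'cV[C]_(m * n)),
        (forall j, 0 <= p j) /\ (forall j, unitvec (psi j)) /\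
        rho = \sum_(j < k) (p j)%:C *: proj (psi j) /\
        s = \sum_(j < k) p j * Eg2_pure h (psi j)].

Definition idx3 dA dB dC (a : 'I_dA) (b : 'I_dB) (c : 'I_dC) : 'I_(dA * dB * dC) :=
  mxtens_index (mxtens_index (a, b), c).

Definition cut_A_BC dA dB dC (eta : 'cV[C]_(dA * dB * dC)) : 'cV[C]_(dA * (dB * dC)) :=
  \col_k (let: (a, bc) := mxtens_unindex k in
          let: (b, c) := mxtens_unindex bc in eta (idx3 a b c) 0).
Definition cut_B_AC dA dB dC (eta : 'cV[C]_(dA * dB * dC)) : 'cV[C]_(dB * (dA * dC)) :=
  \col_k (let: (b, ac) := mxtens_unindex k in
          let: (a, c) := mxtens_unindex ac in eta (idx3 a b c) 0).
Definition cut_C_AB dA dB dC (eta : 'cV[C]_(dA * dB * dC)) : 'cV[C]_(dC * (dA * dB)) :=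
  \col_k (let: (c, ab) := mxtens_unindex k in
          let: (a, b) := mxtens_unindex ab in eta (idx3 a b c) 0).

Definition rhoA dA dB dC (eta : 'cV[C]_(dA * dB * dC)) := ptr2 (proj (cut_A_BC eta)).
Definition rhoB dA dB dC (eta : 'cV[C]_(dA * dB * dC)) := ptr2 (proj (cut_B_AC eta)).
Definition rhoC dA dB dC (eta : 'cV[C]_(dA * dB * dC)) := ptr2 (proj (cut_C_AB eta)).
Definition rhoBC dA dB dC (eta : 'cV[C]_(dA * dB * dC)) := ptr1 (proj (cut_A_BC eta)).
Definition rhoAC dA dB dC (eta : 'cV[C]_(dA * dB * dC)) := ptr1 (proj (cut_B_AC eta)).
Definition rhoAB dA dB dC (eta : 'cV[C]_(dA * dB * dC)) := ptr1 (proj (cut_C_AB eta)).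

Definition Eg3_pure (h : dfun) dA dB dC (eta : 'cV[C]_(dA * dB * dC)) : R :=
  let a := h dA (rhoA eta) in
  let b := h dB (rhoB eta) in
  let c := h dC (rhoC eta) in
  if [&& 0 < a, 0 < b & 0 < c] then Num.max a (Num.max b c) else 0.

Definition biseparable dA dB dC (eta : 'cV[C]_(dA * dB * dC)) : Prop :=
  (exists (x : 'cV[C]_dA) (y : 'cV[C]_(dB * dC)), cut_A_BC eta = x *t y) \/
  (exists (x : 'cV[C]_dB) (y : 'cV[C]_(dA * dC)), cut_B_AC eta = x *t y) \/
  (exists (x : 'cV[C]_dC) (y : 'cV[C]_(dA * dB)), cut_C_AB eta = x *t y).

Definition genuinely_entangled dA dB dC (eta : 'cV[C]_(dA * dB * dC)) : Prop :=
  unitvec eta /\ ~ biseparable eta.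

(* |eta>^{ABC} = (1_A (x) V (x) 1_C)(|eta1>^{AB1} (x) |eta2>^{B2C}), with
   V : H^{B1} (x) H^{B2} -> H^B an isometry (embedding of H^{B1}(x)H^{B2}
   as a subspace of H^B, up to a local unitary on B) *)
Definition eta_form dA dB dC (eta : 'cV[C]_(dA * dB * dC)) : Prop :=
  exists (dB1 dB2 : nat) (eta1 : 'cV[C]_(dA * dB1)) (eta2 : 'cV[C]_(dB2 * dC))
         (V : 'M[C]_(dB, dB1 * dB2)),
    [/\ unitvec eta1, unitvec eta2, adjmx V *m V = 1%:M &
      forall a b c, eta (idx3 a b c) 0 =
        \sum_(b1 < dB1) \sum_(b2 < dB2)
           V b (mxtens_index (b1, b2)) *
           eta1 (mxtens_index (a, b1)) 0 * eta2 (mxtens_index (b2, c)) 0].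

End QInfo.

(* Write the coefficient matrix of eta for the cut B|AC as K = V (M1^T (x) M2), with
   M1, M2 the coefficient matrices of eta1, eta2.  Then rho_A and rho_C are the Gram
   matrices of M1 and M2^T, rho_AC = rho_A (x) rho_C, and rho_B = V (s1 (x) s2) V^* for
   the marginals s1, s2 of eta1 on B1 and of eta2 on B2, which have the nonzero spectra
   of rho_A and rho_C.  Genuine entanglement
   makes s1 and s2 mixed, so strict concavity and tensor monotonicity give
   h(rho_B) > h(rho_A), h(rho_C).  Hence E^(3)(eta) = h(rho_B) is strictly larger than
   E^(2)(A|BC) = h(rho_A) and E^(2)(C|AB) = h(rho_C), and in the remaining case B|AC the
   state rho_AC is a product state, whose convex roof vanishes. *)

From HB Require Import structures.
From mathcomp Require Import all_boot all_order all_algebra.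
From mathcomp Require Import complex mxtens.
From mathcomp Require Import boolp classical_sets reals.
From mathcomp Require Import ring lra.
Import Order.TTheory GRing.Theory Num.Theory.
Set Implicit Arguments. Unset Strict Implicit. Unset Printing Implicit Defensive.
Local Open Scope complex_scope.
Local Open Scope ring_scope.

(* Sylvester's determinant identity in characteristic-polynomial form. *)
Lemma char_poly_mulmx_swap (F : comNzRingType) m n
    (A : 'M[F]_(m, n)) (B : 'M[F]_(n, m)) :
  'X^n * char_poly (A *m B) = 'X^m * char_poly (B *m A).
Proof.
pose A' := map_mx (@polyC F) A; pose B' := map_mx (@polyC F) B.
pose M1 := block_mx (1%:M : 'M_m) (- A') 0 ('X%:M : 'M_n).
pose M2 := block_mx ('X%:M : 'M_m) A' B' (1%:M : 'M_n).
have e1 : M1 *m M2 = block_mx ('X%:M - A' *m B') 0 ('X%:M *m B') 'X%:M.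
  by rewrite mulmx_block !mul1mx !mul0mx !add0r !mulmx1 !mulNmx addrN.
have e2 : M2 *m M1 = block_mx 'X%:M 0 B' ('X%:M - B' *m A').
  rewrite mulmx_block !mulmx1 !mulmx0 !addr0 mul1mx !mulmxN.
  by rewrite scalar_mxC addNr addrC.
have := congr1 determinant e1; have := congr1 determinant e2.
rewrite !det_mulmx det_lblock det_ublock det_lblock !det_scalar ?det1 expr1n !mul1r.
rewrite /char_poly /char_poly_mx !map_mxM -/A' -/B' => det21 det12.
by rewrite mulrC -det12 mulrC det21.
Qed.

Lemma sum_mxtens_index (V : nmodType) m n (F : 'I_(m * n) -> V) :
  \sum_k F k = \sum_i \sum_j F (mxtens_index (i, j)).
Proof.
rewrite pair_big (reindex (@mxtens_index m n)) /=.
  by apply: eq_bigr => -[i j] _.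
by exists (@mxtens_unindex m n) => k _; rewrite (mxtens_indexK, mxtens_unindexK).
Qed.

Section TensorProduct.
Variable F : comPzRingType.

Lemma tensmxDl m n p q (A A' : 'M[F]_(m, n)) (B : 'M[F]_(p, q)) :
  (A + A') *t B = A *t B + A' *t B.
Proof. by apply/matrixP => i j; rewrite !mxE mulrDl. Qed.

Lemma tensmxDr m n p q (A : 'M[F]_(m, n)) (B B' : 'M[F]_(p, q)) :
  A *t (B + B') = A *t B + A *t B'.
Proof. by apply/matrixP => i j; rewrite !mxE mulrDr. Qed.

Lemma tensmxZl m n p q (a : F) (A : 'M[F]_(m, n)) (B : 'M[F]_(p, q)) :
  (a *: A) *t B = a *: (A *t B).
Proof. by apply/matrixP => i j; rewrite !mxE mulrA. Qed.

Lemma tensmxZr m n p q (a : F) (A : 'M[F]_(m, n)) (B : 'M[F]_(p, q)) :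
  A *t (a *: B) = a *: (A *t B).
Proof. by apply/matrixP => i j; rewrite !mxE mulrCA. Qed.

Lemma mxtrace_tens m n (A : 'M[F]_m) (B : 'M[F]_n) : \tr (A *t B) = \tr A * \tr B.
Proof. by rewrite /mxtrace mulr_sum; apply: eq_bigr => k _; rewrite mxE. Qed.

End TensorProduct.

Section ComplexMatrices.
Variable R : realType.
Local Notation C := (R[i]).

Lemma adjmxK m n (A : 'M[C]_(m, n)) : adjmx (adjmx A) = A.
Proof. by apply/matrixP=> i j; rewrite !mxE conjcK. Qed.

Lemma adjmxM m n p (A : 'M[C]_(m, n)) (B : 'M[C]_(n, p)) :
  adjmx (A *m B) = adjmx B *m adjmx A.
Proof. by rewrite /adjmx map_mxM trmx_mul. Qed.

Lemma adjmxB m n (A B : 'M[C]_(m, n)) : adjmx (A - B) = adjmx A - adjmx B.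
Proof. by apply/matrixP=> i j; rewrite !mxE rmorphB. Qed.

Lemma adjmxZ m n (a : C) (A : 'M[C]_(m, n)) : adjmx (a *: A) = conjc a *: adjmx A.
Proof. by apply/matrixP=> i j; rewrite !mxE rmorphM. Qed.

Lemma adjmx_scalar n (a : C) : adjmx (a%:M : 'M_n) = (conjc a)%:M.
Proof. by apply/matrixP=> i j; rewrite !mxE rmorphMn eq_sym. Qed.

Lemma adjmx_tens m n p q (A : 'M[C]_(m, n)) (B : 'M[C]_(p, q)) :
  adjmx (A *t B) = adjmx A *t adjmx B.
Proof. by apply/matrixP=> i j; rewrite !mxE rmorphM. Qed.

Lemma adjmx_trmx m n (A : 'M[C]_(m, n)) : adjmx A^T = (adjmx A)^T.
Proof. by apply/matrixP=> i j; rewrite !mxE. Qed.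

Lemma ge0_complex_real (x : C) : 0 <= x -> x = (complex.Re x)%:C.
Proof. by move=> x_ge0; rewrite RRe_real // ger0_real. Qed.

Lemma same_nonzero_spectrum_mulmxC m n (A : 'M[C]_(m, n)) (B : 'M[C]_(n, m)) :
  same_nonzero_spectrum (A *m B) (B *m A).
Proof.
move=> x x_neq0; have nroot k : ~~ root 'X^k x by rewrite /root hornerXn expf_neq0.
by rewrite -(mupMr _ (nroot n)) char_poly_mulmx_swap mupMr.
Qed.

Lemma same_nonzero_spectrum_trmx n (A : 'M[C]_n) : same_nonzero_spectrum A^T A.
Proof.
move=> x _; rewrite /char_poly -[X in _ = mup _ X]det_tr; do 2 f_equal.
by rewrite /char_poly_mx linearB/= tr_scalar_mx map_trmx.
Qed.

(* The reduced states of a pure state are the Gram matrices of its coefficient matrix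
   and of the transpose of that matrix. *)
Definition gram m n (M : 'M[C]_(m, n)) : 'M[C]_m := M *m adjmx M.

Lemma gramE m n (M : 'M[C]_(m, n)) i j : gram M i j = \sum_k M i k * conjc (M j k).
Proof. by rewrite !mxE; apply: eq_bigr => k _; rewrite !mxE. Qed.

Lemma gramM m n p (X : 'M[C]_(m, n)) (Y : 'M[C]_(n, p)) :
  gram (X *m Y) = X *m gram Y *m adjmx X.
Proof. by rewrite /gram adjmxM !mulmxA. Qed.

Lemma gram_tens m n p q (A : 'M[C]_(m, n)) (B : 'M[C]_(p, q)) :
  gram (A *t B) = gram A *t gram B.
Proof. by rewrite /gram adjmx_tens tensmx_mul. Qed.

Lemma gramZ m n (r : R) (M : 'M[C]_(m, n)) : gram (r%:C *: M) = (r * r)%:C *: gram M.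
Proof.
by rewrite /gram adjmxZ -scalemxAl -scalemxAr scalerA conjc_real rmorphM.
Qed.

Lemma gram_sum_col m n (M : 'M[C]_(m, n)) : gram M = \sum_j proj (col j M).
Proof.
apply/matrixP => i i'; rewrite gramE summxE; apply: eq_bigr => j _.
by rewrite !mxE big_ord1 !mxE.
Qed.

Lemma mxtrace_gramE m n (M : 'M[C]_(m, n)) :
  \tr (gram M) = \sum_i \sum_k M i k * conjc (M i k).
Proof. by apply: eq_bigr => i _; rewrite gramE. Qed.

Lemma mxtrace_gram_ge0 m n (M : 'M[C]_(m, n)) : 0 <= \tr (gram M).
Proof. by rewrite mxtrace_gramE; do 2!(apply: sumr_ge0 => ? _); apply: mulcJ_ge0. Qed.

Lemma mxtrace_gram_eq0 m n (M : 'M[C]_(m, n)) : \tr (gram M) = 0 -> M = 0.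
Proof.
rewrite mxtrace_gramE => tr0; apply/matrixP => i j; rewrite mxE.
have row_ge0 i' : true -> 0 <= \sum_k M i' k * conjc (M i' k).
  by move=> _; apply: sumr_ge0 => k _; apply: mulcJ_ge0.
have entry_ge0 k : true -> 0 <= M i k * conjc (M i k) by move=> _; apply: mulcJ_ge0.
have row0 := psumr_eq0P row_ge0 tr0.
have /eqP := @psumr_eq0P _ _ _ _ entry_ge0 (row0 i isT) j isT.
by rewrite mulf_eq0 conjc_eq0 orbb => /eqP.
Qed.

Lemma mxtrace_gram_trmx m n (M : 'M[C]_(m, n)) : \tr (gram M^T) = \tr (gram M).
Proof.
by rewrite !mxtrace_gramE exchange_big; do 2!(apply: eq_bigr => ? _); rewrite !mxE.
Qed.

Lemma mxtrace_gram_real m n (M : 'M[C]_(m, n)) :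
  exists2 s : R, 0 <= s & \tr (gram M) = s%:C.
Proof.
exists (complex.Re (\tr (gram M))); last exact/ge0_complex_real/mxtrace_gram_ge0.
by rewrite -lecR -ge0_complex_real mxtrace_gram_ge0.
Qed.

Lemma gram_normalize m n (M : 'M[C]_(m, n)) (s : R) :
  0 < s -> \tr (gram M) = s%:C ->
  let M' := ((Num.sqrt s)^-1)%:C *: M in
  \tr (gram M') = 1 /\ gram M = s%:C *: gram M'.
Proof.
move=> s_gt0 trM M'; have s_neq0 : s != 0 by rewrite gt_eqF.
have gramM' : gram M' = (s^-1)%:C *: gram M.
  by rewrite gramZ -invfM -expr2 sqr_sqrtr // ltW.
rewrite gramM' mxtraceZ trM -rmorphM mulVf // scalerA -rmorphM mulfV //.
by rewrite scale1r.
Qed.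

Lemma psd_gram m n (M : 'M[C]_(m, n)) : psd (gram M).
Proof.
move=> v; rewrite /gram !mulmxA -mulmxA.
have -> : adjmx M *m v = adjmx (adjmx v *m M) by rewrite adjmxM adjmxK.
by rewrite -/(gram _) gramE; apply: sumr_ge0 => k _; apply: mulcJ_ge0.
Qed.

Lemma density_gram m n (M : 'M[C]_(m, n)) : \tr (gram M) = 1 -> density (gram M).
Proof. by split; [exact: psd_gram|]. Qed.

Lemma same_nonzero_spectrum_gram m n (M : 'M[C]_(m, n)) :
  same_nonzero_spectrum (gram M) (gram M^T).
Proof.
move=> x x_neq0.
have -> : gram M^T = (adjmx M *m M)^T by rewrite /gram adjmx_trmx trmx_mul.
by rewrite same_nonzero_spectrum_trmx // -same_nonzero_spectrum_mulmxC.
Qed.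

Lemma unitvecE n (v : 'cV[C]_n) : unitvec v <-> \tr (proj v) = 1.
Proof.
have -> : \tr (proj v) = (adjmx v *m v) 0 0.
  by rewrite /mxtrace mxE; apply: eq_bigr => i _; rewrite !mxE big_ord1 !mxE mulrC.
split => [-> | v_unit]; first by rewrite mxE.
by apply/matrixP => i j; rewrite !ord1 v_unit mxE.
Qed.

Lemma pure_gram_col n (v : 'cV[C]_n) : \tr (gram v) = 1 -> pure (gram v).
Proof. by exists v; split => //; apply/unitvecE. Qed.

Lemma proj_tens m n (x : 'cV[C]_m) (y : 'cV[C]_n) : proj (x *t y) = proj x *t proj y.
Proof. exact: (gram_tens x y). Qed.

Lemma gram_proj_factor m n (M : 'M[C]_(m, n)) (u : 'cV[C]_m) :
  unitvec u -> gram M = proj u -> M = u *m (adjmx u *m M).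
Proof.
move=> u_unit gramMu; pose P := 1%:M - proj u.
have Pu : P *m u = 0 by rewrite mulmxBl mul1mx -mulmxA u_unit mulmx1 subrr.
have adjP : adjmx P = P by rewrite adjmxB adjmx_scalar conjc1 adjmxM adjmxK.
have /mxtrace_gram_eq0 : \tr (gram (P *m M)) = 0.
  by rewrite gramM adjP gramMu /proj !mulmxA Pu !mul0mx mxtrace0.
by rewrite mulmxBl mul1mx mulmxA => /eqP; rewrite subr_eq0 => /eqP.
Qed.

End ComplexMatrices.

Section PartialTrace.
Variable R : realType.
Local Notation C := (R[i]).

Definition cvec_mx m n (v : 'cV[C]_(m * n)) : 'M[C]_(m, n) :=
  \matrix_(i, j) v (mxtens_index (i, j)) 0.

Lemma ptr2_proj m n (v : 'cV[C]_(m * n)) : ptr2 (proj v) = gram (cvec_mx v).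
Proof.
apply/matrixP => i j; rewrite gramE mxE; apply: eq_bigr => k _.
by rewrite !mxE big_ord1 !mxE.
Qed.

Lemma ptr1_proj m n (v : 'cV[C]_(m * n)) : ptr1 (proj v) = gram (cvec_mx v)^T.
Proof.
apply/matrixP => i j; rewrite gramE mxE; apply: eq_bigr => k _.
by rewrite !mxE big_ord1 !mxE.
Qed.

Lemma mxtrace_gram_cvec_mx m n (v : 'cV[C]_(m * n)) :
  unitvec v -> \tr (gram (cvec_mx v)) = 1.
Proof.
move/unitvecE <-; rewrite mxtrace_gramE /mxtrace sum_mxtens_index.
by apply: eq_bigr => i _; apply: eq_bigr => j _; rewrite !mxE big_ord1 !mxE.
Qed.

Lemma ptr2_tens m n (A : 'M[C]_m) (B : 'M[C]_n) : ptr2 (A *t B) = \tr B *: A.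
Proof.
apply/matrixP => i j; rewrite !mxE mulrC /mxtrace mulr_sumr.
by apply: eq_bigr => k _; rewrite tensmxE.
Qed.

Lemma ptr1_tens m n (A : 'M[C]_m) (B : 'M[C]_n) : ptr1 (A *t B) = \tr A *: B.
Proof.
apply/matrixP => i j; rewrite !mxE /mxtrace mulr_suml.
by apply: eq_bigr => k _; rewrite tensmxE.
Qed.

End PartialTrace.

Section MixedGram.
Variable R : realType.
Local Notation C := (R[i]).

(* Splitting off a nonzero column [c] of [N]: [N N^* = c c^* + N2 N2^*]. *)
Lemma gram_split_mixed n l (N : 'M[C]_(n, l)) : \tr (gram N) = 1 -> ~ pure (gram N) ->
  exists (s : R) (c : 'cV[C]_n) (N2 : 'M[C]_(n, l)),
   [/\ 0 < s < 1, \tr (gram c) = 1, \tr (gram N2) = 1, gram c != gram N2 &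
       gram N = s%:C *: gram c + (1 - s)%:C *: gram N2].
Proof.
move=> trN N_mixed.
have [j0 colN_neq0] : exists j, col j N != 0.
  case: (pselect (exists j, col j N != 0)) => // colN0; move: trN.
  have -> : N = 0.
    apply/matrixP => i j; have /eqP/matrixP/(_ i 0) : col j N == 0.
      by apply/negPn/negP => colN_neq0; apply: colN0; exists j.
    by rewrite !mxE.
  by rewrite /gram mul0mx mxtrace0 => /eqP; rewrite eq_sym oner_eq0.
pose c := col j0 N; pose N2 := \matrix_(i, j) if j == j0 then 0 else N i j.
have gramN : gram N = gram c + gram N2.
  apply/matrixP => i i'; rewrite gramE [RHS]mxE !gramE (bigD1 j0) //= big_ord1 !mxE.
  congr (_ + _); rewrite [RHS](bigD1 j0) //= !mxE eqxx mul0r add0r.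
  by apply: eq_bigr => j /negbTE j_neq; rewrite !mxE j_neq.
have trsum : \tr (gram c) + \tr (gram N2) = 1 by rewrite -mxtraceD -gramN.
have [s _ trc] := mxtrace_gram_real c.
have trN2 : \tr (gram N2) = (1 - s)%:C by rewrite rmorphB rmorph1 /= -trc -trsum addrC addKr.
have s_gt0 : 0 < s.
  rewrite -ltcR -trc lt_def mxtrace_gram_ge0 andbT.
  by apply: contraNneq colN_neq0 => /mxtrace_gram_eq0 c0; apply/eqP.
have s_lt1 : 0 < 1 - s.
  rewrite -ltcR -trN2 lt_def mxtrace_gram_ge0 andbT.
  apply/eqP => /mxtrace_gram_eq0 N20; apply: N_mixed; rewrite gramN.
  rewrite N20 /gram mul0mx addr0; apply: pure_gram_col.
  by rewrite -/(gram _) -trsum N20 /gram mul0mx mxtrace0 addr0.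
have [trc' gramc] := gram_normalize s_gt0 trc.
have [trN2' gramN2] := gram_normalize s_lt1 trN2.
set c' := _ *: c in trc' gramc; set N2' := _ *: N2 in trN2' gramN2.
have gramN' : gram N = s%:C *: gram c' + (1 - s)%:C *: gram N2'.
  by rewrite gramN -gramc -gramN2.
exists s, c', N2'; split => //; first by rewrite s_gt0 -subr_gt0.
apply: contra_notN N_mixed => /eqP eq_gram; rewrite gramN' -eq_gram -scalerDl.
by rewrite -rmorphD addrC subrK scale1r; apply: pure_gram_col.
Qed.

End MixedGram.

Section ReducedFunction.
Variable R : realType.
Local Notation C := (R[i]).
(* Otherwise the dimension argument of [h] would become implicit. *)
Unset Implicit Arguments.
Variable h : dfun R.
Set Implicit Arguments.
Hypothesis h_reduced : reduced_function h.

Lemma reduced_ge0 n (A : 'M[C]_n) : density A -> 0 <= h n A.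
Proof. by case: h_reduced => h_ge0 _ _ _; apply: h_ge0. Qed.

Lemma reduced_eq0 n (A : 'M[C]_n) : density A -> (h n A = 0 <-> pure A).
Proof. by case: h_reduced => _ _ _ h_eq0; apply: h_eq0. Qed.

Lemma reduced_gt0 n (A : 'M[C]_n) : density A -> ~ pure A -> 0 < h n A.
Proof.
move=> A_density A_mixed; rewrite lt_def reduced_ge0 // andbT.
by apply/eqP => /(reduced_eq0 A_density).
Qed.

Lemma reduced_spectrum m n (A : 'M[C]_m) (B : 'M[C]_n) : density A -> density B ->
  same_nonzero_spectrum A B -> h m A = h n B.
Proof. by case: h_reduced => _ _ h_spec _; apply: h_spec. Qed.

Lemma reduced_gram_trmx m n (M : 'M[C]_(m, n)) :
  \tr (gram M) = 1 -> h m (gram M) = h n (gram M^T).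
Proof.
move=> trM; apply: reduced_spectrum (same_nonzero_spectrum_gram M).
  exact: density_gram.
by apply: density_gram; rewrite mxtrace_gram_trmx.
Qed.

Lemma reduced_isometry p q (V : 'M[C]_(p, q)) (Z : 'M[C]_q) : adjmx V *m V = 1%:M ->
  density Z -> density (V *m Z *m adjmx V) -> h p (V *m Z *m adjmx V) = h q Z.
Proof.
move=> V_isometry Z_density VZ_density; apply: reduced_spectrum => //.
by have := same_nonzero_spectrum_mulmxC V (Z *m adjmx V); rewrite -mulmxA V_isometry mulmx1 mulmxA.
Qed.

Lemma Eg2_pure_mixed m n (psi : 'cV[C]_(m * n)) :
  \tr (ptr2 (proj psi)) = 1 -> 0 < h m (ptr2 (proj psi)) ->
  Eg2_pure h psi = h m (ptr2 (proj psi)).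
Proof.
rewrite /Eg2_pure ptr1_proj ptr2_proj => trM h_gt0.
by rewrite -(reduced_gram_trmx trM) h_gt0 maxxx.
Qed.

Lemma Eg2_pure_tens m n (x : 'cV[C]_m) (y : 'cV[C]_n) :
  unitvec (x *t y) -> Eg2_pure h (x *t y) = 0.
Proof.
move/unitvecE; rewrite proj_tens mxtrace_tens => trxy.
have [t t_ge0 try] := mxtrace_gram_real y.
pose x' := (Num.sqrt t)%:C *: x.
have gram_x' : gram x' = t%:C *: gram x by rewrite gramZ -expr2 sqr_sqrtr.
have trx' : \tr (gram x') = 1 by rewrite gram_x' mxtraceZ mulrC -try.
have : h m (gram x') = 0 by apply/(reduced_eq0 (density_gram trx'))/pure_gram_col.
rewrite /Eg2_pure proj_tens ptr2_tens -[proj y]/(gram y) try -gram_x' => ->.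
by rewrite ltxx.
Qed.

End ReducedFunction.

Section ConvexRoof.
Variable R : realType.
Local Notation C := (R[i]).
Unset Implicit Arguments.
Variable h : dfun R.
Set Implicit Arguments.

Lemma Eg2_pure_ge0 m n (psi : 'cV[C]_(m * n)) : 0 <= Eg2_pure h psi.
Proof. by rewrite /Eg2_pure; case: ifP => // /andP[a_gt0 _]; rewrite le_max ltW. Qed.

Lemma Eg2_eq0 m n k (rho : 'M[C]_(m * n)) (p : 'I_k -> R) (psi : 'I_k -> 'cV[C]_(m * n)) :
  (forall j, 0 <= p j) -> (forall j, unitvec (psi j)) ->
  rho = \sum_j (p j)%:C *: proj (psi j) -> (forall j, Eg2_pure h (psi j) = 0) ->
  Eg2 h rho = 0.
Proof.
move=> p_ge0 psi_unit rhoE Eg2_psi; rewrite /Eg2; set S := (X in inf X).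
have S_ge0 : lbound S 0.
  move=> _ [k' [p' [psi' [p'_ge0 [_ [_ ->]]]]]]; apply: sumr_ge0 => j _.
  exact/mulr_ge0/Eg2_pure_ge0.
have S0 : S 0.
  exists k, p, psi; do 3!split => //.
  by symmetry; apply: big1 => j _; rewrite Eg2_psi mulr0.
apply/eqP; rewrite eq_le ge_inf ?lb_le_inf //; by [exists 0 | exists 0].
Qed.

(* The columns of [M], normalized; a zero column is replaced by a fixed nonzero one
   and given weight [0]. *)
Lemma gram_decomposition m n (M : 'M[C]_(m, n)) : \tr (gram M) = 1 ->
  exists (p : 'I_n -> R) (f : 'I_n -> 'I_n) (s : 'I_n -> R),
    [/\ forall j, 0 <= p j, forall j, unitvec ((s j)%:C *: col (f j) M) &
        gram M = \sum_j (p j)%:C *: proj ((s j)%:C *: col (f j) M)].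
Proof.
move=> trM; pose p j := complex.Re (\tr (gram (col j M))).
have trp j : \tr (gram (col j M)) = (p j)%:C by apply/ge0_complex_real/mxtrace_gram_ge0.
have p_ge0 j : 0 <= p j by rewrite -lecR -trp mxtrace_gram_ge0.
have [js p_js] : exists js, p js != 0.
  case: (pselect (exists js, p js != 0)) => // p0; move: trM.
  rewrite gram_sum_col raddf_sum big1 => [/eqP|j _]; first by rewrite eq_sym oner_eq0.
  case: (eqVneq (p j) 0) => [pj0|pj]; last by case: p0; exists j.
  by rewrite /= -[proj _]/(gram _) trp pj0.
pose f j := if p j == 0 then js else j.
have pf_gt0 j : 0 < p (f j).
  by rewrite lt_def p_ge0 andbT /f; case: ifP => // /negbT.
exists p, f, (fun j => (Num.sqrt (p (f j)))^-1); split => // [j|].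
  by have [] := gram_normalize (pf_gt0 j) (trp (f j)); rewrite -unitvecE.
rewrite gram_sum_col; apply: eq_bigr => j _.
have [_ gram_col] := gram_normalize (pf_gt0 j) (trp (f j)).
rewrite /f in gram_col *; case: (eqVneq (p j) 0) gram_col => [pj0 | _ <-] //.
have /mxtrace_gram_eq0 colj0 : \tr (gram (col j M)) = 0 by rewrite trp pj0.
by rewrite -[proj (col j M)]/(gram _) colj0 pj0 /gram mul0mx scale0r.
Qed.

Lemma Eg2_gram_tens m k1 n k2 (L : 'M[C]_(m, k1)) (L' : 'M[C]_(n, k2)) :
  reduced_function h -> \tr (gram (L *t L')) = 1 -> Eg2 h (gram (L *t L')) = 0.
Proof.
move=> h_reduced /gram_decomposition [p [f [s [p_ge0 psi_unit gramE']]]].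
have Eg2_psi j : Eg2_pure h ((s j)%:C *: col (f j) (L *t L')) = 0.
  pose k := mxtens_unindex (f j); move: (psi_unit j).
  have -> : (s j)%:C *: col (f j) (L *t L') = ((s j)%:C *: col k.1 L) *t col k.2 L'.
    by apply/matrixP => i i'; rewrite !mxE mulrA.
  exact: (Eg2_pure_tens h_reduced (x := (s j)%:C *: col k.1 L) (y := col k.2 L')).
exact: Eg2_eq0 p_ge0 psi_unit gramE' Eg2_psi.
Qed.

End ConvexRoof.

Section StrictMonotonicity.
Variable R : realType.
Local Notation C := (R[i]).
Unset Implicit Arguments.
Variable h : dfun R.
Set Implicit Arguments.
Hypothesis h_strict : strictly_concave_on_states h.
Hypothesis h_tens : tensor_monotone h.

Lemma strictly_concave_lt_mix n (X1 X2 : 'M[C]_n) (s y : R) :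
  density X1 -> density X2 -> X1 != X2 -> 0 < s < 1 ->
  y <= h n X1 -> y <= h n X2 -> y < h n (s%:C *: X1 + (1 - s)%:C *: X2).
Proof.
move=> X1_density X2_density X12 /[dup] /andP[s_gt0 s_lt1] s01 y_le1 y_le2.
rewrite -subr_gt0 in s_lt1.
have := h_strict X1_density X2_density X12 s01.
have := ler_wpM2l (ltW s_gt0) y_le1.
have := ler_wpM2l (ltW s_lt1) y_le2.
lra.
Qed.

Lemma density_gram_tens m k n l (M : 'M[C]_(m, k)) (N : 'M[C]_(n, l)) :
  \tr (gram M) = 1 -> \tr (gram N) = 1 -> density (gram M *t gram N).
Proof.
move=> trM trN; rewrite -gram_tens; apply: density_gram.
by rewrite gram_tens mxtrace_tens trM trN mulr1.
Qed.

(* Tensoring with a mixed state strictly increases [h]: split the mixed factor into two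
   distinct states and use strict concavity together with tensor monotonicity. *)
Lemma lt_tens_mixedr m k n l (M : 'M[C]_(m, k)) (N : 'M[C]_(n, l)) :
  \tr (gram M) = 1 -> \tr (gram N) = 1 -> ~ pure (gram N) ->
  h m (gram M) < h (m * n)%N (gram M *t gram N).
Proof.
move=> trM trN N_mixed.
have [s [c [N2 [s01 trc trN2 c_neq_N2 gramN]]]] := gram_split_mixed trN N_mixed.
rewrite gramN tensmxDr !tensmxZr; apply: strictly_concave_lt_mix => //.
- exact: density_gram_tens.
- exact: density_gram_tens.
- apply: contra c_neq_N2 => /eqP /(congr1 (@ptr1 R _ _)).
  by rewrite !ptr1_tens trM !scale1r => ->.
- by case: (h_tens (density_gram trM) (density_gram trc)).
- by case: (h_tens (density_gram trM) (density_gram trN2)).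
Qed.

Lemma lt_tens_mixedl m k n l (M : 'M[C]_(m, k)) (N : 'M[C]_(n, l)) :
  \tr (gram M) = 1 -> \tr (gram N) = 1 -> ~ pure (gram M) ->
  h n (gram N) < h (m * n)%N (gram M *t gram N).
Proof.
move=> trM trN M_mixed.
have [s [c [M2 [s01 trc trM2 c_neq_M2 gramM]]]] := gram_split_mixed trM M_mixed.
rewrite gramM tensmxDl !tensmxZl; apply: strictly_concave_lt_mix => //.
- exact: density_gram_tens.
- exact: density_gram_tens.
- apply: contra c_neq_M2 => /eqP /(congr1 (@ptr2 R _ _)).
  by rewrite !ptr2_tens trN !scale1r => ->.
- by case: (h_tens (density_gram trc) (density_gram trN)).
- by case: (h_tens (density_gram trM2) (density_gram trN)).
Qed.

End StrictMonotonicity.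

Section CoefficientMatrix.
Variable R : realType.
Local Notation C := (R[i]).
Variables dA dB dC : nat.
Variable eta : 'cV[C]_(dA * dB * dC).

Lemma cut_A_BC_tens (x : 'cV[C]_dA) (F : 'I_dB -> 'I_dC -> C) :
  (forall a b c, eta (idx3 a b c) 0 = x a 0 * F b c) ->
  exists (x : 'cV[C]_dA) (y : 'cV[C]_(dB * dC)), cut_A_BC eta = x *t y.
Proof.
move=> etaE; exists x, (\col_k F (mxtens_unindex k).1 (mxtens_unindex k).2).
apply/matrixP => k j; case: (mxtens_indexP k) => a bc; case: (mxtens_indexP bc) => b c.
by rewrite !mxE !mxtens_indexK /= etaE !ord1.
Qed.

Lemma cut_C_AB_tens (z : 'cV[C]_dC) (F : 'I_dA -> 'I_dB -> C) :
  (forall a b c, eta (idx3 a b c) 0 = F a b * z c 0) ->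
  exists (z : 'cV[C]_dC) (y : 'cV[C]_(dA * dB)), cut_C_AB eta = z *t y.
Proof.
move=> etaE; exists z, (\col_k F (mxtens_unindex k).1 (mxtens_unindex k).2).
apply/matrixP => k j; case: (mxtens_indexP k) => c ab; case: (mxtens_indexP ab) => a b.
by rewrite !mxE !mxtens_indexK /= etaE !ord1 mulrC.
Qed.

Variable K : 'M[C]_(dB, dA * dC).
Hypothesis etaK : forall a b c, eta (idx3 a b c) 0 = K b (mxtens_index (a, c)).

Lemma cvec_mx_cut_B_AC : cvec_mx (cut_B_AC eta) = K.
Proof.
apply/matrixP => b k; case: (mxtens_indexP k) => a c.
by rewrite !mxE !mxtens_indexK /= etaK.
Qed.

Lemma rhoB_gram : rhoB eta = gram K.
Proof. by rewrite /rhoB ptr2_proj cvec_mx_cut_B_AC. Qed.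

Lemma rhoAC_gram : rhoAC eta = gram K^T.
Proof. by rewrite /rhoAC ptr1_proj cvec_mx_cut_B_AC. Qed.

Lemma rhoA_ptr2 : rhoA eta = ptr2 (gram K^T).
Proof.
rewrite /rhoA ptr2_proj; apply/matrixP => a a'.
rewrite gramE mxE sum_mxtens_index exchange_big; apply: eq_bigr => c _.
by rewrite gramE; apply: eq_bigr => b _; rewrite !mxE !mxtens_indexK /= !etaK.
Qed.

Lemma rhoC_ptr1 : rhoC eta = ptr1 (gram K^T).
Proof.
rewrite /rhoC ptr2_proj; apply/matrixP => c c'.
rewrite gramE mxE sum_mxtens_index; apply: eq_bigr => a _.
by rewrite gramE; apply: eq_bigr => b _; rewrite !mxE !mxtens_indexK /= !etaK.
Qed.

End CoefficientMatrix.

Lemma eta_form_coefmx (R : realType) dA dB dC (eta : 'cV[R[i]]_(dA * dB * dC)) :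
  eta_form eta -> exists dB1 dB2 (M1 : 'M[R[i]]_(dA, dB1)) (M2 : 'M[R[i]]_(dB2, dC))
    (V : 'M[R[i]]_(dB, dB1 * dB2)),
  [/\ \tr (gram M1) = 1, \tr (gram M2) = 1, adjmx V *m V = 1%:M &
      forall a b c, eta (idx3 a b c) 0 = (V *m (M1^T *t M2)) b (mxtens_index (a, c))].
Proof.
move=> [dB1 [dB2 [eta1 [eta2 [V [eta1_unit eta2_unit V_isometry etaE]]]]]].
exists dB1, dB2, (cvec_mx eta1), (cvec_mx eta2), V.
split; [exact: mxtrace_gram_cvec_mx | exact: mxtrace_gram_cvec_mx | by [] |].
move=> a b c; rewrite etaE mxE sum_mxtens_index.
by do 2!(apply: eq_bigr => ? _); rewrite tensmxE !mxE mulrA.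
Qed.

Section EtaForm.
Variable R : realType.
Local Notation C := (R[i]).
Variables dA dB dC dB1 dB2 : nat.
Variables (M1 : 'M[C]_(dA, dB1)) (M2 : 'M[C]_(dB2, dC)) (V : 'M[C]_(dB, dB1 * dB2)).
Variable eta : 'cV[C]_(dA * dB * dC).
Hypotheses (trM1 : \tr (gram M1) = 1) (trM2 : \tr (gram M2) = 1).
Hypothesis V_isometry : adjmx V *m V = 1%:M.
Hypothesis etaE : forall a b c,
  eta (idx3 a b c) 0 = (V *m (M1^T *t M2)) b (mxtens_index (a, c)).

Local Notation K := (V *m (M1^T *t M2)).

Lemma coefmxE a b c :
  K b (mxtens_index (a, c)) =
  \sum_b1 \sum_b2 V b (mxtens_index (b1, b2)) * (M1 a b1 * M2 b2 c).
Proof.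
rewrite mxE sum_mxtens_index; do 2!(apply: eq_bigr => ? _).
by rewrite tensmxE !mxE.
Qed.

Lemma gram_coefmx_trmx : gram K^T = gram M1 *t gram M2^T.
Proof.
have gramVT : gram V^T = 1%:M.
  by rewrite /gram adjmx_trmx -trmx_mul V_isometry tr_scalar_mx.
by rewrite trmx_mul trmx_tens trmxK gramM gramVT mulmx1 -gram_tens.
Qed.

Lemma rhoA_eta : rhoA eta = gram M1.
Proof.
by rewrite (rhoA_ptr2 etaE) gram_coefmx_trmx ptr2_tens mxtrace_gram_trmx trM2 scale1r.
Qed.

Lemma rhoC_eta : rhoC eta = gram M2^T.
Proof. by rewrite (rhoC_ptr1 etaE) gram_coefmx_trmx ptr1_tens trM1 scale1r. Qed.

Lemma rhoAC_eta : rhoAC eta = gram (M1 *t M2^T).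
Proof. by rewrite (rhoAC_gram etaE) gram_coefmx_trmx gram_tens. Qed.

Lemma rhoB_eta : rhoB eta = V *m (gram M1^T *t gram M2) *m adjmx V.
Proof. by rewrite (rhoB_gram etaE) gramM gram_tens. Qed.

Lemma mixed_gram_M1 : ~ biseparable eta -> ~ pure (gram M1^T).
Proof.
move=> eta_ent [u [u_unit gramM1]]; apply: eta_ent; left.
have M1E := gram_proj_factor u_unit gramM1; set w := adjmx u *m M1^T in M1E.
apply: (@cut_A_BC_tens _ _ _ _ _ w^T
  (fun b c => \sum_b1 \sum_b2 V b (mxtens_index (b1, b2)) * (u b1 0 * M2 b2 c))).
move=> a b c; rewrite etaE coefmxE mulr_sumr; apply: eq_bigr => b1 _.
rewrite mulr_sumr; apply: eq_bigr => b2 _.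
have -> : M1 a b1 = u b1 0 * w 0 a.
  by have := congr1 (fun X : 'M[C]_(dB1, dA) => X b1 a) M1E; rewrite /= mxE => ->; rewrite mxE big_ord1.
by rewrite [w^T a 0]mxE; ring.
Qed.

Lemma mixed_gram_M2 : ~ biseparable eta -> ~ pure (gram M2).
Proof.
move=> eta_ent [u [u_unit gramM2]]; apply: eta_ent; right; right.
have M2E := gram_proj_factor u_unit gramM2; set w := adjmx u *m M2 in M2E.
apply: (@cut_C_AB_tens _ _ _ _ _ w^T
  (fun a b => \sum_b1 \sum_b2 V b (mxtens_index (b1, b2)) * (M1 a b1 * u b2 0))).
move=> a b c; rewrite etaE coefmxE mulr_suml; apply: eq_bigr => b1 _.
rewrite mulr_suml; apply: eq_bigr => b2 _.
by rewrite {1}M2E mxE big_ord1 [w^T c 0]mxE; ring.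
Qed.

Hypothesis eta_entangled : ~ biseparable eta.
Unset Implicit Arguments.
Variable h : dfun R.
Set Implicit Arguments.
Hypotheses (h_reduced : reduced_function h) (h_strict : strictly_concave_on_states h).
Hypothesis h_tens : tensor_monotone h.

Lemma mxtrace_gram_M1T : \tr (gram M1^T) = 1. Proof. by rewrite mxtrace_gram_trmx. Qed.

Lemma h_rhoA_gt0 : 0 < h dA (rhoA eta).
Proof.
rewrite rhoA_eta (reduced_gram_trmx h_reduced trM1).
exact: reduced_gt0 (density_gram mxtrace_gram_M1T) (mixed_gram_M1 eta_entangled).
Qed.

Lemma h_rhoC_gt0 : 0 < h dC (rhoC eta).
Proof.
rewrite rhoC_eta -(reduced_gram_trmx h_reduced trM2).
exact: reduced_gt0 (density_gram trM2) (mixed_gram_M2 eta_entangled).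
Qed.

Lemma h_rhoB_eta : h dB (rhoB eta) = h (dB1 * dB2)%N (gram M1^T *t gram M2).
Proof.
rewrite rhoB_eta (reduced_isometry h_reduced V_isometry) //.
  exact: density_gram_tens mxtrace_gram_M1T trM2.
rewrite -rhoB_eta (rhoB_gram etaE); apply: density_gram.
by rewrite -mxtrace_gram_trmx gram_coefmx_trmx mxtrace_tens trM1 mxtrace_gram_trmx trM2 mulr1.
Qed.


Lemma h_rhoA_lt_rhoB : h dA (rhoA eta) < h dB (rhoB eta).
Proof.
rewrite h_rhoB_eta rhoA_eta (reduced_gram_trmx h_reduced trM1).
exact (lt_tens_mixedr h_strict h_tens mxtrace_gram_M1T trM2 (mixed_gram_M2 eta_entangled)).
Qed.

Lemma h_rhoC_lt_rhoB : h dC (rhoC eta) < h dB (rhoB eta).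
Proof.
rewrite h_rhoB_eta rhoC_eta -(reduced_gram_trmx h_reduced trM2).
exact (lt_tens_mixedl h_strict h_tens mxtrace_gram_M1T trM2 (mixed_gram_M1 eta_entangled)).
Qed.

Lemma Eg3_pure_eta : Eg3_pure h eta = h dB (rhoB eta).
Proof.
rewrite /Eg3_pure h_rhoA_gt0 h_rhoC_gt0 (lt_trans h_rhoA_gt0 h_rhoA_lt_rhoB) /=.
by rewrite (max_idPl (ltW h_rhoC_lt_rhoB)) (max_idPr (ltW h_rhoA_lt_rhoB)).
Qed.

Lemma Eg2_pure_A_BC_lt : Eg2_pure h (cut_A_BC eta) < Eg3_pure h eta.
Proof.
rewrite Eg3_pure_eta (Eg2_pure_mixed h_reduced _ h_rhoA_gt0) ?h_rhoA_lt_rhoB //.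
by rewrite -/(rhoA eta) rhoA_eta.
Qed.

Lemma Eg2_pure_C_AB_lt : Eg2_pure h (cut_C_AB eta) < Eg3_pure h eta.
Proof.
rewrite Eg3_pure_eta (Eg2_pure_mixed h_reduced _ h_rhoC_gt0) ?h_rhoC_lt_rhoB //.
by rewrite -/(rhoC eta) rhoC_eta mxtrace_gram_trmx.
Qed.

Lemma Eg2_rhoAC : Eg2 h (rhoAC eta) = 0.
Proof.
rewrite rhoAC_eta; apply: Eg2_gram_tens h_reduced _.
by rewrite gram_tens mxtrace_tens trM1 mxtrace_gram_trmx trM2 mulr1.
Qed.

End EtaForm.

Theorem proposition6 (R : realType) (h : dfun R) :
  reduced_function h -> strictly_concave_on_states h -> tensor_monotone h ->
  forall (dA dB dC : nat) (eta : 'cV[R[i]]_(dA * dB * dC)),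
    eta_form eta -> genuinely_entangled eta ->
    [/\ Eg3_pure h eta = Eg2_pure h (cut_A_BC eta) -> Eg2 h (rhoBC eta) = 0,
        Eg3_pure h eta = Eg2_pure h (cut_B_AC eta) -> Eg2 h (rhoAC eta) = 0
      & Eg3_pure h eta = Eg2_pure h (cut_C_AB eta) -> Eg2 h (rhoAB eta) = 0].
Proof.
move=> h_reduced h_strict h_tens dA dB dC eta /eta_form_coefmx.
move=> [dB1 [dB2 [M1 [M2 [V [trM1 trM2 V_isometry etaE]]]]]] [_ eta_entangled].
have lt_A := Eg2_pure_A_BC_lt trM1 trM2 V_isometry etaE eta_entangled h_reduced h_strict h_tens.
have lt_C := Eg2_pure_C_AB_lt trM1 trM2 V_isometry etaE eta_entangled h_reduced h_strict h_tens.
split=> [Eg3E | _ | Eg3E].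
- by move: lt_A; rewrite Eg3E ltxx.
- exact (Eg2_rhoAC trM1 trM2 V_isometry etaE h_reduced).
- by move: lt_C; rewrite Eg3E ltxx.
Qed.
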